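(* Let $\mathcal{X}$ be a finite set, $\pi$ a probability mass function on $\mathcal{X}$ with full support, and $P$ a $\pi$-reversible transition matrix on $\mathcal{X}$. Let a group $\mathcal{G}$ act on $\mathcal{X}$ with orbits $\mathcal{O}_1,\dots,\mathcal{O}_k$, and let $G$ be the associated Gibbs orbit kernel. Then $\gamma(P)\ge\gamma(GPG)$. Equality holds when the maximum-achieving orbit $\mathcal{O}_i$ (in the definition of $\gamma(P)$) satisfies that $\sum_{y\notin\mathcal{O}_i}P(x,y)$ is the same for all $x\in\mathcal{O}_i$.
   Context: The Gibbs orbit kernel is $G(x,y)=\pi(y)/\pi(\mathcal{O}(x))$ if $y\in\mathcal{O}(x)$ (the orbit of $x$), and $0$ otherwise, where $\pi(A)=\sum_{z\in A}\pi(z)$. For a transition matrix $K$, $\gamma(K):=\max_{i\in\{1,\dots,k\}}\max_{x\in\mathcal{O}_i}\sum_{y\in\mathcal{X}\setminus\mathcal{O}_i}K(x,y)$. *)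

From HB Require Import structures.
From mathcomp Require Import all_boot all_order all_algebra all_fingroup.
Set Implicit Arguments. Unset Strict Implicit. Unset Printing Implicit Defensive.
Import Order.TTheory GRing.Theory Num.Theory.
Local Open Scope ring_scope.

Section Defs.
Variable R : realFieldType.
Variable X : finType.

Definition full_support_pmf (pi : X -> R) : Prop :=
  (forall x, 0 < pi x) /\ \sum_x pi x = 1.

Definition transition_matrix (P : X -> X -> R) : Prop :=
  (forall x y, 0 <= P x y) /\ (forall x, \sum_y P x y = 1).

Definition reversible (pi : X -> R) (P : X -> X -> R) : Prop :=
  forall x y, pi x * P x y = pi y * P y x.

Definition kmul (K L : X -> X -> R) : X -> X -> R :=
  fun x y => \sum_z K x z * L z y.

Variable gT : finGroupType.
Variable H : {group gT}.
Variable to : {action gT &-> X}.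

Definition massof (pi : X -> R) (A : {set X}) : R := \sum_(z in A) pi z.

Definition gibbs_orbit_kernel (pi : X -> R) : X -> X -> R :=
  fun x y => if y \in orbit to H x then pi y / massof pi (orbit to H x) else 0.

Definition out_orbit (K : X -> X -> R) (x : X) : R :=
  \sum_(y | y \notin orbit to H x) K x y.

(* gamma(K) = max_i max_{x in O_i} sum_{y notin O_i} K(x,y)
            = max_x sum_{y notin O(x)} K(x,y)  (orbits partition X) *)
Definition gamma (K : X -> X -> R) : R :=
  \big[Num.max/0]_x out_orbit K x.
End Defs.

(* Since G only moves mass inside orbits, composing with G on the right does
   not change the probability of leaving the current orbit, and composing with
   G on the left replaces the starting point x by a pi-distributed point of its
   orbit.  Hence the escape probability of GPG from x is the pi-weighted average
   of the escape probabilities of P over the orbit of x: it is at most gamma(P),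
   and equals it at a maximising orbit on which the escape probability of P is
   constant. *)

From HB Require Import structures.
From mathcomp Require Import all_boot all_order all_algebra all_fingroup.
Import Order.TTheory GRing.Theory Num.Theory.
Local Open Scope ring_scope.

Section ConvexCombination.
Variables (R : realFieldType) (I : finType) (A : pred I) (w f : I -> R).
Hypothesis w_sum1 : \sum_(i in A) w i = 1.

Lemma convex_comb_le c :
  {in A, forall i, 0 <= w i} -> {in A, forall i, f i <= c} ->
  \sum_(i in A) w i * f i <= c.
Proof.
move=> w_ge0 f_le; rewrite -[leRHS]mul1r -w_sum1 mulr_suml.
by apply: ler_sum => i Ai; rewrite ler_wpM2l ?w_ge0 ?f_le.
Qed.

Lemma convex_comb_const c :
  {in A, forall i, f i = c} -> \sum_(i in A) w i * f i = c.
Proof.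
move=> f_c; rewrite -[RHS]mul1r -w_sum1 mulr_suml.
by apply: eq_bigr => i Ai; rewrite f_c.
Qed.

End ConvexCombination.

Section Gamma.
Variables (R : realFieldType) (X : finType) (gT : finGroupType).
Variables (H : {group gT}) (to : {action gT &-> X}).
Implicit Type K : X -> X -> R.

Lemma gamma_ge0 K : 0 <= gamma H to K.
Proof.
by rewrite /gamma; elim/big_rec: _ => // x v _ v_ge0; rewrite le_max v_ge0 orbT.
Qed.

Lemma out_orbit_le_gamma K x : out_orbit H to K x <= gamma H to K.
Proof. by rewrite /gamma (bigD1 x) //= le_max lexx. Qed.

Lemma gamma_le K c :
  0 <= c -> (forall x, out_orbit H to K x <= c) -> gamma H to K <= c.
Proof.
move=> c_ge0 out_le; rewrite /gamma.
by elim/big_ind: _ => // a b; rewrite ge_max => -> ->.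
Qed.

End Gamma.

Section GibbsOrbitKernel.
Variables (R : realFieldType) (X : finType) (gT : finGroupType).
Variables (H : {group gT}) (to : {action gT &-> X}) (pi : X -> R).
Hypothesis pi_gt0 : forall x, 0 < pi x.
Implicit Type K : X -> X -> R.

Local Notation O x := (orbit to H x).
Local Notation G := (gibbs_orbit_kernel H to pi).

Lemma massof_orbit_gt0 x : 0 < massof pi (O x).
Proof.
rewrite /massof (bigD1 x) ?orbit_refl //= ltr_pwDl //.
by apply: sumr_ge0 => z _; apply: ltW.
Qed.

Lemma gibbs_weight_ge0 x z : 0 <= pi z / massof pi (O x).
Proof. by rewrite divr_ge0 ?ltW ?massof_orbit_gt0. Qed.

Lemma gibbs_weights_sum1 x : \sum_(z in O x) pi z / massof pi (O x) = 1.
Proof. by rewrite -mulr_suml divff // gt_eqF ?massof_orbit_gt0. Qed.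

Lemma gibbs_out_orbit w x :
  \sum_(y | y \notin O x) G w y = if w \in O x then 0 else 1.
Proof.
rewrite /gibbs_orbit_kernel -big_mkcondr /=.
have [/orbit_eqP Ow_Ox | wNOx] := boolP (w \in O x).
  by rewrite big_pred0 // => y; rewrite Ow_Ox andNb.
rewrite -(gibbs_weights_sum1 w); apply: eq_bigl => y.
case Ow_y: (y \in O w); rewrite ?andbF ?andbT //.
by apply: contra wNOx; rewrite orbit_sym in Ow_y; apply: orbit_trans.
Qed.

Lemma out_orbit_kmul_gibbs K x :
  out_orbit H to (kmul K G) x = \sum_(w | w \notin O x) K x w.
Proof.
rewrite /out_orbit /kmul exchange_big [RHS]big_mkcond /=.
apply: eq_bigr => w _; rewrite -mulr_sumr gibbs_out_orbit.
by case: (w \in O x); rewrite ?mulr0 ?mulr1.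
Qed.

Lemma out_orbit_gibbs_kmul K x :
  out_orbit H to (kmul G K) x =
  \sum_(z in O x) pi z / massof pi (O x) * out_orbit H to K z.
Proof.
rewrite /out_orbit /kmul exchange_big [RHS]big_mkcond /=.
apply: eq_bigr => z _; rewrite -mulr_sumr /gibbs_orbit_kernel.
by case: ifP => [/orbit_eqP -> | _]; rewrite ?mul0r.
Qed.

Lemma out_orbit_gibbs_sandwich K x :
  out_orbit H to (kmul (kmul G K) G) x =
  \sum_(z in O x) pi z / massof pi (O x) * out_orbit H to K z.
Proof. by rewrite out_orbit_kmul_gibbs; apply: out_orbit_gibbs_kmul. Qed.

End GibbsOrbitKernel.

Theorem proposition2p5 (R : realFieldType) (X : finType) (gT : finGroupType)
  (H : {group gT}) (to : {action gT &-> X})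
  (pi : X -> R) (P : X -> X -> R) :
  full_support_pmf pi ->
  transition_matrix P ->
  reversible pi P ->
  let G := gibbs_orbit_kernel H to pi in
  gamma H to (kmul (kmul G P) G) <= gamma H to P /\
  (forall x0 : X,
     gamma H to P = out_orbit H to P x0 ->
     (forall x, x \in orbit to H x0 ->
        out_orbit H to P x = out_orbit H to P x0) ->
     gamma H to P = gamma H to (kmul (kmul G P) G)).
Proof.
move=> [pi_gt0 _] _ _ G.
have gammaGPG_le : gamma H to (kmul (kmul G P) G) <= gamma H to P.
  apply: gamma_le => [|x]; first exact: gamma_ge0.
  rewrite out_orbit_gibbs_sandwich //.
  apply: convex_comb_le => [|z _|z _]; first exact: gibbs_weights_sum1.
    exact: gibbs_weight_ge0.
  exact: out_orbit_le_gamma.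
split=> // x0 gammaP_x0 out_const.
have outGPG_x0 : out_orbit H to (kmul (kmul G P) G) x0 = out_orbit H to P x0.
  rewrite out_orbit_gibbs_sandwich //.
  by apply: convex_comb_const; first exact: gibbs_weights_sum1.
apply: le_anti; rewrite gammaGPG_le andbT gammaP_x0 -outGPG_x0.
exact: out_orbit_le_gamma.
Qed.
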